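(* Let $R\subset S$ be a finite Gilmer extension which is seminormal and infra-integral. Then $R\subset S$ is unramified and has FIP.
   Context: Rings are commutative with identity. $(R:S)=\{r\in R\mid rS\subseteq R\}$; Gilmer extension: $R/(R:S)$ Artinian. Seminormal: $b\in S$, $b^2,b^3\in R$ imply $b\in R$. Infra-integral: integral and all residual field extensions $\kappa(Q\cap R)\to\kappa(Q)$ are isomorphisms. Unramified: of finite type with $\Omega(S|R)=0$. FIP: finitely many $R$-subalgebras. *)

From HB Require Import structures.
From mathcomp Require Import all_boot all_order all_algebra.
Set Implicit Arguments. Unset Strict Implicit. Unset Printing Implicit Defensive.
Import GRing.Theory.
Local Open Scope ring_scope.

(* A ring extension R ⊆ S is encoded as a commutative ring S together with a
   subset R : S -> Prop which is a subring (contains 0,1, closed under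
   subtraction and multiplication). *)
Section Ext.
Variable S : comNzRingType.
Implicit Types (R T I J Q : S -> Prop).

Definition subset_of (A B : S -> Prop) := forall x, A x -> B x.
Definition same_set (A B : S -> Prop) := forall x, A x <-> B x.

Definition is_subring R : Prop :=
  [/\ R 0, R 1, (forall x y, R x -> R y -> R (x - y))
    & (forall x y, R x -> R y -> R (x * y))].

Definition finite_ext R : Prop :=
  exists xs : seq S, forall s : S, exists cs : seq S,
    [/\ size cs = size xs, (forall i, R cs`_i)
      & s = \sum_(i < size xs) cs`_i * xs`_i].

Definition finite_type_ext R : Prop :=
  exists xs : seq S, forall s : S, forall P : S -> Prop,
    subset_of R P -> (forall x, x \in xs -> P x) ->
    (forall x y, P x -> P y -> P (x + y)) ->
    (forall x y, P x -> P y -> P (x * y)) -> P s.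

Definition conductor R : S -> Prop := fun r => R r /\ forall s : S, R (r * s).

Definition ideal_of R J : Prop :=
  [/\ subset_of J R, J 0, (forall x y, J x -> J y -> J (x + y))
    & (forall r x, R r -> J x -> J (r * x))].

(* R/I is Artinian: ideals of R/I correspond to ideals of R containing I;
   every descending chain of such ideals stabilizes. *)
Definition artinian_quotient R I : Prop :=
  forall J : nat -> (S -> Prop),
    (forall n, ideal_of R (J n)) -> (forall n, subset_of I (J n)) ->
    (forall n, subset_of (J n.+1) (J n)) ->
    exists N, forall n, (N <= n)%N -> same_set (J n) (J N).

Definition gilmer_ext R : Prop := artinian_quotient R (conductor R).

Definition seminormal_ext R : Prop :=
  forall b : S, R (b ^+ 2) -> R (b ^+ 3) -> R b.

Definition ideal_S Q : Prop :=
  [/\ Q 0, (forall x y, Q x -> Q y -> Q (x + y)) & (forall r x, Q x -> Q (r * x))].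
Definition prime_ideal Q : Prop :=
  [/\ ideal_S Q, ~ Q 1 & (forall a b, Q (a * b) -> Q a \/ Q b)].

Definition integral_ext R : Prop :=
  forall s : S, exists p : {poly S},
    [/\ p \is monic, (forall i, R p`_i) & root p s].

(* The residual extension κ(Q ∩ R) -> κ(Q), with κ(P) = Frac(A/P), sends
   c/d to c/d; it is always an injective field morphism, and it is an
   isomorphism iff every a/b (a,b in S, b ∉ Q) equals some c/d (c,d in R,
   d ∉ Q) in Frac(S/Q), i.e. a*d - b*c ∈ Q. *)
Definition residual_iso R Q : Prop :=
  forall a b : S, ~ Q b ->
    exists c d : S, [/\ R c, R d, ~ Q d & Q (a * d - b * c)].

Definition infra_integral_ext R : Prop :=
  integral_ext R /\ forall Q, prime_ideal Q -> residual_iso R Q.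

(* Kähler differentials Ω(S|R) = F/N, where F is the free S-module on symbols
   [x] (x in S), whose elements we represent by finite formal sums
   (seq of (coefficient, symbol)), and N is the S-submodule generated by
   [a+b]-[a]-[b], [ab]-a[b]-b[a], and [r] (r in R). *)
Definition fcoef (l : seq (S * S)) (t : S) : S :=
  \sum_(p <- l) (if p.2 == t then p.1 else 0).

Definition kahler_rel R (l : seq (S * S)) : Prop :=
  (exists a b : S, l = [:: (1, a + b); (-1, a); (-1, b)]) \/
  (exists a b : S, l = [:: (1, a * b); (- a, b); (- b, a)]) \/
  (exists r : S, R r /\ l = [:: (1, r)]).

Definition in_kahler_relations R (l : seq (S * S)) : Prop :=
  exists gs : seq (S * seq (S * S)),
    (forall k, (k < size gs)%N -> kahler_rel R (nth (0, [::]) gs k).2) /\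
    forall t : S, fcoef l t = \sum_(cg <- gs) cg.1 * fcoef cg.2 t.

(* Ω(S|R) = 0 iff every generator [s] lies in N. *)
Definition kahler_zero R : Prop :=
  forall s : S, in_kahler_relations R [:: (1, s)].

Definition unramified_ext R : Prop := finite_type_ext R /\ kahler_zero R.

Definition subalgebra R T : Prop := is_subring T /\ subset_of R T.

Definition fip_ext R : Prop :=
  exists l : seq (S -> Prop), forall T, subalgebra R T ->
    exists2 k, (k < size l)%N & same_set T (nth (fun _ => False) l k).

End Ext.

(* Seminormality makes the conductor C a radical ideal of S, and as S is a finite module over
   the Artinian ring R/C, the R-submodules of S containing C satisfy the descending chain
   condition.  So S/C is reduced Artinian, hence von Neumann regular, and 1 is, modulo C, a
   finite sum of primitive idempotents e_i.  Infra-integrality at the prime { z | e_i z ∈ C }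
   gives e_i S ≡ e_i R, so every element of S is, modulo C ⊆ R, an R-linear combination of
   idempotents.  Idempotents have zero differential, whence Ω(S|R) = 0.  An R-subalgebra T
   splits each of its elements into such pieces using idempotents of T itself, so T is the
   R-span modulo C of the sums of subsets of the e_i which it contains: there are only
   finitely many such spans. *)

From mathcomp Require Import all_boot all_order all_algebra ring.
From mathcomp Require Import boolp.
Set Implicit Arguments. Unset Strict Implicit. Unset Printing Implicit Defensive.
Import GRing.Theory.
Local Open Scope ring_scope.

Section Subring.
Variables (S : comNzRingType) (P : S -> Prop).
Hypothesis subP : is_subring P.

Lemma subring0 : P 0. Proof. by case: subP. Qed.
Lemma subring1 : P 1. Proof. by case: subP. Qed.
Lemma subringB x y : P x -> P y -> P (x - y). Proof. by case: subP => _ _ + _; apply. Qed.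
Lemma subringM x y : P x -> P y -> P (x * y). Proof. by case: subP => _ _ _; apply. Qed.
Lemma subringN x : P x -> P (- x).
Proof. by move=> Px; rewrite -sub0r; apply: subringB => //; exact: subring0. Qed.
Lemma subringD x y : P x -> P y -> P (x + y).
Proof. by move=> Px Py; rewrite -[y]opprK; apply/subringB/subringN. Qed.

End Subring.

Section Chains.
Variable S : comNzRingType.

Lemma desc_chain_sub (N : nat -> S -> Prop) :
  (forall n, subset_of (N n.+1) (N n)) ->
  forall m n, (m <= n)%N -> subset_of (N n) (N m).
Proof.
move=> descN m; elim=> [|n IH]; first by rewrite leqn0 => /eqP ->.
rewrite leq_eqVlt => /orP [/eqP -> //|lt_mn] x Nx.
by apply: IH => //; exact: descN.
Qed.

Lemma strict_sub_wf (X : Type) (F : X -> S -> Prop) :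
  (forall u : nat -> X, (forall n, subset_of (F (u n.+1)) (F (u n))) ->
    exists N, subset_of (F (u N)) (F (u N.+1))) ->
  well_founded (fun y x => subset_of (F y) (F x) /\ ~ subset_of (F x) (F y)).
Proof.
(* Otherwise dependent choice yields an infinite strictly descending chain. *)
set lt := fun y x => _ /\ _ => dccF x0; apply: contrapT => notAcc0.
have step z : ~ Acc lt z -> exists y, lt y z /\ ~ Acc lt y.
  move=> notAcc; apply: contrapT => noy; apply: notAcc; constructor => y lt_yz.
  by apply: contrapT => notAcc; apply: noy; exists y.
pose next (p : {z | ~ Acc lt z}) : {z | ~ Acc lt z} :=
  let (y, Hy) := cid (step _ (proj2_sig p)) in exist _ y (proj2 Hy).
have lt_next p : lt (proj1_sig (next p)) (proj1_sig p).
  by rewrite /next; case: cid => y [].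
pose u n := proj1_sig (iter n next (exist _ x0 notAcc0)).
have lt_u n : lt (u n.+1) (u n) by rewrite /u iterS; exact: lt_next.
have [N stabN] := dccF u (fun n => (lt_u n).1).
exact: (lt_u N).2.
Qed.

End Chains.

Section Development.
Variables (S : comNzRingType) (R : S -> Prop).
Hypothesis HR : is_subring R.
Local Notation C := (conductor R).

Lemma conductor_sub x : C x -> R x. Proof. by case. Qed.

Lemma conductor0 : C 0.
Proof. by split=> [|s]; rewrite ?mul0r; exact: subring0 HR. Qed.

Lemma conductorMl x y : C x -> C (y * x).
Proof.
case=> Rx Cx; split; first by rewrite mulrC.
by move=> s; rewrite (mulrC y) -mulrA.
Qed.

Lemma conductorMr x y : C x -> C (x * y).
Proof. by rewrite mulrC; exact: conductorMl. Qed.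

Lemma conductorB x y : C x -> C y -> C (x - y).
Proof.
case=> Rx Cx [Ry Cy]; split=> [|s]; first exact: subringB.
by rewrite mulrBl; apply: subringB.
Qed.

Lemma conductorD x y : C x -> C y -> C (x + y).
Proof.
move=> Cx Cy; rewrite -[y]opprK -[- y]sub0r.
exact: conductorB Cx (conductorB conductor0 Cy).
Qed.

Lemma conductor_eq x y : C x -> x = y -> C y. Proof. by move=> + <-. Qed.

Lemma conductor_sum (I : Type) (r : seq I) (P : pred I) (F : I -> S) :
  (forall i, P i -> C (F i)) -> C (\sum_(i <- r | P i) F i).
Proof. by move=> CF; apply: big_ind => //; [exact: conductor0 | exact: conductorD]. Qed.

Hypothesis Hsn : seminormal_ext R.

Lemma conductor_sqr x : C (x ^+ 2) -> C x.
Proof.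
case=> _ Cx2.
have Cx s : R (x * s).
  apply: Hsn; first by rewrite exprMn.
  by rewrite (_ : (x * s) ^+ 3 = x ^+ 2 * (x * s ^+ 3)) //; ring.
by split=> //; rewrite -[x]mulr1.
Qed.

Lemma conductor_radical n x : C (x ^+ n) -> C x.
Proof.
case: n => [|n]; first by rewrite expr0 => C1; rewrite -[x]mulr1; exact: conductorMl.
elim: n => [|n IH]; first by rewrite expr1.
move=> Cxn; apply: IH; apply: conductor_sqr.
by rewrite expr2 -exprD -addSnnS exprD; exact: conductorMr.
Qed.

(* The R/C-submodules of S/C. *)
Definition cond_submod (N : S -> Prop) :=
  [/\ subset_of C N, forall x y, N x -> N y -> N (x + y)
    & forall r x, R r -> N x -> N (r * x)].

Lemma cond_submodB N x y : cond_submod N -> N x -> N y -> N (x - y).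
Proof.
case=> _ addN scaleN Nx Ny; rewrite -mulN1r; apply: addN Nx (scaleN _ _ _ Ny).
by apply: (subringN HR); exact: subring1 HR.
Qed.

Fixpoint gen_span (xs : seq S) (k : nat) : S -> Prop :=
  if k is k'.+1 then
    fun x => exists r y, [/\ R r, gen_span xs k' y & x = r * xs`_k' + y]
  else C.

Lemma gen_span_submod xs k : cond_submod (gen_span xs k).
Proof.
elim: k => [|k [sub_k add_k scale_k]] /=.
  by split=> [//|x y|r x _]; [exact: conductorD | exact: conductorMl].
split.
- move=> c Cc; exists 0, c; split; [exact: subring0 HR | exact: sub_k | ring].
- move=> _ _ [r1 [y1 [R1 Y1 ->]]] [r2 [y2 [R2 Y2 ->]]].
  exists (r1 + r2), (y1 + y2); split; [exact: subringD | exact: add_k | ring].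
- move=> r _ Rr [r1 [y1 [R1 Y1 ->]]].
  exists (r * r1), (r * y1); split; [exact: subringM | exact: scale_k | ring].
Qed.

Definition lead_ideal xs k (N : S -> Prop) : S -> Prop :=
  fun r => R r /\ exists2 y, gen_span xs k y & N (r * xs`_k + y).

Lemma lead_ideal_ideal xs k N : cond_submod N ->
  ideal_of R (lead_ideal xs k N) /\ subset_of C (lead_ideal xs k N).
Proof.
case=> subN addN scaleN; have [sub_k add_k scale_k] := gen_span_submod xs k.
split; last first.
  move=> c Cc; split; first exact: conductor_sub.
  by exists 0; [exact: sub_k conductor0 | rewrite addr0; exact/subN/conductorMr].
split.
- by move=> r [].
- split; first exact: subring0 HR.
  by exists 0; [exact: sub_k conductor0 | rewrite mul0r addr0; exact/subN/conductor0].
- move=> r1 r2 [R1 [y1 Y1 N1]] [R2 [y2 Y2 N2]]; split; first exact: subringD.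
  exists (y1 + y2); first exact: add_k.
  by rewrite (_ : _ + _ = (r1 * xs`_k + y1) + (r2 * xs`_k + y2)); [exact: addN | ring].
- move=> r r1 Rr [R1 [y1 Y1 N1]]; split; first exact: subringM.
  exists (r * y1); first exact: scale_k.
  by rewrite (_ : _ + _ = r * (r1 * xs`_k + y1)); [exact: scaleN | ring].
Qed.

Hypothesis Hgil : gilmer_ext R.

Lemma dcc_gen_span xs k (N : nat -> S -> Prop) :
  (forall n, cond_submod (N n)) -> (forall n, subset_of (N n) (gen_span xs k)) ->
  (forall n, subset_of (N n.+1) (N n)) ->
  exists m, forall n, (m <= n)%N -> subset_of (N m) (N n).
Proof.
(* A chain in gen_span xs k.+1 stabilises once both its ideals of leading coefficients (in the
   Artinian R/C) and its intersections with gen_span xs k do. *)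
elim: k N => [|k IH] N subN spanN descN.
  by exists 0%N => n _ x /spanN; case: (subN n) => + _ _; apply.
pose I n := lead_ideal xs k (N n).
have [m1 stabI] : exists m1, forall n, (m1 <= n)%N -> same_set (I n) (I m1).
  apply: Hgil => [n|n|n r [Rr [y Y Ny]]].
  - exact: (lead_ideal_ideal xs k (subN n)).1.
  - exact: (lead_ideal_ideal xs k (subN n)).2.
  - by split=> //; exists y => //; exact: descN.
pose K n x := N n x /\ gen_span xs k x.
have subK n : cond_submod (K n).
  have [sub_k add_k scale_k] := gen_span_submod xs k.
  case: (subN n) => subNn addNn scaleNn.
  by split=> [c Cc|x y [? ?] [? ?]|r x Rr [? ?]]; split; auto.
have descK n : subset_of (K n.+1) (K n) by move=> x [/descN ? ?].
have [m2 stabK] := IH K subK (fun n x Kx => Kx.2) descK.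
exists (maxn m1 m2) => n le_mn x Nx.
have [r [y [Rr Y Ex]]] := spanN _ x Nx; rewrite Ex in Nx *.
have [_ [y' Y' Nn']] : I n r.
  apply: (stabI n (leq_trans (leq_maxl m1 m2) le_mn) r).2.
  by apply: (stabI _ (leq_maxl m1 m2) r).1; split=> //; exists y.
have Ky : K n (y - y').
  apply: (stabK n (leq_trans (leq_maxr m1 m2) le_mn)).
  apply: (desc_chain_sub descK (leq_maxr m1 m2)); split; last first.
    exact: cond_submodB (gen_span_submod xs k) Y Y'.
  rewrite (_ : y - y' = (r * xs`_k + y) - (r * xs`_k + y')); last by ring.
  exact: cond_submodB (subN _) Nx (desc_chain_sub descN le_mn Nn').
rewrite (_ : r * xs`_k + y = (y - y') + (r * xs`_k + y')); last by ring.
by case: (subN n) => _ addN _; apply: addN Ky.1 Nn'.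
Qed.

Hypothesis Hfin : finite_ext R.

Lemma dcc_cond_submod (N : nat -> S -> Prop) :
  (forall n, cond_submod (N n)) -> (forall n, subset_of (N n.+1) (N n)) ->
  exists m, forall n, (m <= n)%N -> subset_of (N m) (N n).
Proof.
case: Hfin => xs spanxs subN descN.
apply: (dcc_gen_span (k := size xs)) => // n x _.
have [cs [_ Rcs ->]] := spanxs x.
elim: (size xs) => [|k IH]; first by rewrite big_ord0; exact: conductor0.
rewrite big_ord_recr /=; exists cs`_k, (\sum_(i < k) cs`_i * xs`_i).
by split=> //; rewrite addrC.
Qed.

(* The chain u^n T + C stabilises, and u^m ∈ u^(m+1) T + C makes u (1 - u t) nilpotent
   modulo C. *)
Lemma conductor_regular (T : S -> Prop) : is_subring T -> subset_of R T ->
  forall u, T u -> exists2 y, T y & C (u - u ^+ 2 * y).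
Proof.
move=> HT RT u Tu.
pose N n x := exists t c, [/\ T t, C c & x = u ^+ n * t + c].
have subN n : cond_submod (N n).
  split.
  - move=> c Cc; exists 0, c; split=> //; [exact: subring0 HT | ring].
  - move=> _ _ [t1 [c1 [T1 C1 ->]]] [t2 [c2 [T2 C2 ->]]].
    exists (t1 + t2), (c1 + c2); split; [exact: subringD | exact: conductorD | ring].
  - move=> r _ Rr [t1 [c1 [T1 C1 ->]]].
    exists (r * t1), (r * c1); split; last by ring.
      by apply: (subringM HT) T1; exact: RT.
    exact: conductorMl.
have descN n : subset_of (N n.+1) (N n).
  move=> _ [t [c [Tt Cc ->]]]; exists (u * t), c; split=> //; first exact: subringM.
  by rewrite exprS; ring.
have [m stab] := dcc_cond_submod subN descN.
have [t [c [Tt Cc Ec]]] : N m.+1 (u ^+ m).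
  apply: stab (leqnSn m) _ _; exists 1, 0.
  by split; [exact: subring1 HT | exact: conductor0 | ring].
exists t => //.
have nilp : C ((u * (1 - u * t)) ^+ m.+1).
  rewrite (_ : _ ^+ _ = (u ^+ m - u ^+ m.+1 * t) * (u * (1 - u * t) ^+ m)).
    by apply: conductorMr; apply: (conductor_eq Cc); rewrite Ec; ring.
  by rewrite exprMn !exprS; ring.
by apply: (conductor_eq (conductor_radical nilp)); ring.
Qed.

Definition idem_mod e := C (e * e - e).
Definition idem_le f e := C (f - f * e).
Definition primitive_idem e := [/\ idem_mod e, ~ C e &
  forall f, idem_mod f -> idem_le f e -> C f \/ C (f - e)].

Lemma idem_mod1 : idem_mod 1.
Proof. by rewrite /idem_mod mulr1 subrr; exact: conductor0. Qed.

Lemma idem_modM a b : idem_mod a -> idem_mod b -> idem_mod (a * b).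
Proof.
move=> Ia Ib; apply: (conductor_eq (conductorD (conductorMr (b * b) Ia) (conductorMl a Ib))).
ring.
Qed.

Lemma idem_mod1B a : idem_mod a -> idem_mod (1 - a).
Proof. by move=> Ia; apply: (conductor_eq Ia); ring. Qed.

Definition principal x : S -> Prop := fun z => exists s c, C c /\ z = x * s + c.

Definition principal_lt y x :=
  subset_of (principal y) (principal x) /\ ~ subset_of (principal x) (principal y).

Lemma principal_self x : principal x x.
Proof. by exists 1, 0; split; [exact: conductor0 | ring]. Qed.

Lemma principal_submod x : cond_submod (principal x).
Proof.
split.
- by move=> c Cc; exists 0, c; split=> //; ring.
- move=> _ _ [s1 [c1 [C1 ->]]] [s2 [c2 [C2 ->]]]; exists (s1 + s2), (c1 + c2).
  by split; [exact: conductorD | ring].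
- move=> r _ _ [s1 [c1 [C1 ->]]]; exists (r * s1), (r * c1).
  by split; [exact: conductorMl | ring].
Qed.

Lemma principal_lt_wf : well_founded principal_lt.
Proof.
apply: strict_sub_wf => u descu.
have [m stab] := dcc_cond_submod (fun n => principal_submod (u n)) descu.
by exists m; exact: stab.
Qed.

Lemma idem_le_lt f e : idem_mod f -> idem_le f e -> ~ C (f - e) -> principal_lt f e.
Proof.
move=> If fe nfe; split.
  move=> _ [s [c [Cc ->]]]; exists (f * s), ((f - f * e) * s + c).
  by split; [exact: conductorD (conductorMr s fe) Cc | ring].
move=> /(_ e (principal_self e)) [s [c [Cc Ee]]]; apply: nfe.
have : C ((f * s + c) - f * (f * s + c)).
  apply: (conductor_eq (conductorD (conductorMr (- s) If) (conductorB Cc (conductorMl f Cc)))).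
  ring.
by rewrite -Ee => Ce; apply: (conductor_eq (conductorB fe Ce)); ring.
Qed.

Lemma idem_compl_lt f e : idem_mod f -> idem_le f e -> ~ C f -> principal_lt (e - f * e) e.
Proof.
move=> If fe nCf; split.
  by move=> _ [s [c [Cc ->]]]; exists ((1 - f) * s), c; split=> //; ring.
move=> /(_ e (principal_self e)) [s [c [Cc Ee]]]; apply: nCf.
have : C (f * ((e - f * e) * s + c)).
  by apply: (conductor_eq (conductorD (conductorMr (- e * s) If) (conductorMl f Cc))); ring.
by rewrite -Ee => Ce; apply: (conductor_eq (conductorD fe Ce)); ring.
Qed.

Lemma primitive_decomposition e : idem_mod e ->
  exists2 es : seq S,
    (forall x, x \in es -> primitive_idem x) & C (e - \sum_(x <- es) x).
Proof.
elim: (principal_lt_wf e) => {}e _ IH Ie.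
case: (pselect (C e)) => [Ce|nCe]; first by exists [::]; rewrite ?big_nil ?subr0.
case: (pselect (primitive_idem e)) => [Pe|nPe].
  exists [:: e]; first by move=> x; rewrite inE => /eqP ->.
  by rewrite big_seq1 subrr; exact: conductor0.
have [f [If fe nCf nfe]] : exists f, [/\ idem_mod f, idem_le f e, ~ C f & ~ C (f - e)].
  apply: contrapT => nof; apply: nPe; split=> // f If fe.
  case: (pselect (C f)) => [|nCf]; first by left.
  by case: (pselect (C (f - e))) => [|nfe]; [right | case: nof; exists f].
have Ig : idem_mod (e - f * e).
  apply: (conductor_eq (conductorD (conductorMr (1 - 2%:R * f + f * f) Ie) (conductorMr e If))).
  ring.
have [es1 Pes1 Ces1] := IH _ (idem_le_lt If fe nfe) If.
have [es2 Pes2 Ces2] := IH _ (idem_compl_lt If fe nCf) Ig.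
exists (es1 ++ es2).
  by move=> x; rewrite mem_cat => /orP []; [exact: Pes1 | exact: Pes2].
by rewrite big_cat /=; apply: (conductor_eq (conductorB (conductorD Ces1 Ces2) fe)); ring.
Qed.

Lemma primitive_prime e : primitive_idem e -> prime_ideal (fun z => C (e * z)).
Proof.
case=> Ie nCe primE; split; first split.
- by rewrite mulr0; exact: conductor0.
- by move=> x y Cx Cy; rewrite mulrDr; exact: conductorD.
- by move=> r x Cx; rewrite mulrCA; exact: conductorMl.
- by rewrite mulr1.
(* If e x ∉ C, a quasi-inverse z of e x makes e x z an idempotent below e, hence ≡ e. *)
move=> x y Cxy; case: (pselect (C (e * x))) => Cx; [by left | right].
have [z _ Cz] : exists2 z, True & C (e * x - (e * x) ^+ 2 * z).
  by apply: (@conductor_regular (fun _ => True)) => //; split.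
have Ig : idem_mod (e * x * z).
  by apply: (conductor_eq (conductorMr z (conductorMl (-1) Cz))); ring.
have ge : idem_le (e * x * z) e.
  by apply: (conductor_eq (conductorMl (- (x * z)) Ie)); ring.
case: (primE _ Ig ge) => Cg.
  by case: Cx; apply: (conductor_eq (conductorD Cz (conductorMl (e * x) Cg))); ring.
by apply: (conductor_eq (conductorD (conductorMr (- y) Cg) (conductorMl z Cxy))); ring.
Qed.

Hypothesis Hii : infra_integral_ext R.

Lemma primitive_residue e : primitive_idem e ->
  forall a, exists2 r, R r & C (e * a - e * r).
Proof.
move=> Pe a; have [Ie _ primE] := Pe; have [_ nQ1 _] := primitive_prime Pe.
have [c [d [Rc Rd nd ad]]] := Hii.2 _ (primitive_prime Pe) a 1 nQ1.
have [w Rw Cw] := conductor_regular HR (fun _ => id) Rd.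
have Ik : idem_mod (e * (1 - d * w)).
  apply: idem_modM => //; apply: idem_mod1B.
  by apply: (conductor_eq (conductorMr (- w) Cw)); ring.
have ke : idem_le (e * (1 - d * w)) e.
  by apply: (conductor_eq (conductorMl (- (1 - d * w)) Ie)); ring.
case: (primE _ Ik ke) => Ck.
  exists (c * w); first exact: subringM.
  by apply: (conductor_eq (conductorD (conductorMl a Ck) (conductorMl w ad))); ring.
case: nd; apply: (conductor_eq (conductorD (conductorMl e Cw) (conductorMr (- d) Ck))).
ring.
Qed.

Definition span_mod (A : S -> Prop) : S -> Prop := fun x =>
  exists ps : seq (S * S), (forall p, p \in ps -> R p.1 /\ A p.2) /\
    C (x - \sum_(p <- ps) p.1 * p.2).

Section SpanMod.
Variable A : S -> Prop.

Lemma span_mod_conductor x : C x -> span_mod A x.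
Proof. by exists [::]; rewrite big_nil subr0. Qed.

Lemma span_mod_cong x y : C (x - y) -> span_mod A y -> span_mod A x.
Proof.
move=> Cxy [ps [Aps Cy]]; exists ps; split=> //.
by apply: (conductor_eq (conductorD Cxy Cy)); ring.
Qed.

Lemma span_modD x y : span_mod A x -> span_mod A y -> span_mod A (x + y).
Proof.
move=> [ps1 [A1 C1]] [ps2 [A2 C2]]; exists (ps1 ++ ps2); split.
  by move=> p; rewrite mem_cat => /orP []; [exact: A1 | exact: A2].
by rewrite big_cat /=; apply: (conductor_eq (conductorD C1 C2)); ring.
Qed.

Lemma span_modZ r x : R r -> span_mod A x -> span_mod A (r * x).
Proof.
move=> Rr [ps [Aps Cx]]; exists [seq (r * p.1, p.2) | p <- ps]; split.
  by move=> _ /mapP [p /Aps [R1 A2] ->]; split=> //; exact: subringM.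
rewrite big_map; apply: (conductor_eq (conductorMl r Cx)).
by rewrite mulrBr mulr_sumr; congr (_ - _); apply: eq_bigr => p _; rewrite mulrA.
Qed.

Lemma span_mod_term r a : R r -> A a -> span_mod A (r * a).
Proof.
move=> Rr Aa; exists [:: (r, a)]; rewrite big_seq1 subrr.
by split=> [p|]; [rewrite inE => /eqP -> | exact: conductor0].
Qed.

Lemma span_mod_sub (T : S -> Prop) : is_subring T -> subset_of R T -> subset_of A T ->
  subset_of (span_mod A) T.
Proof.
move=> HT RT AT x [ps [Aps Cx]].
rewrite -(subrK (\sum_(p <- ps) p.1 * p.2) x); apply: subringD => //.
  exact/RT/conductor_sub.
elim: ps Aps {Cx} => [|p ps IH] Aps; first by rewrite big_nil; exact: subring0.
have [Rp Ap] := Aps p (mem_head _ _).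
rewrite big_cons; apply: subringD => //.
  by apply: subringM => //; [exact: RT | exact: AT].
by apply: IH => q Hq; apply: Aps; rewrite inE Hq orbT.
Qed.

End SpanMod.

Lemma span_mod_trans (A B : S -> Prop) x :
  (forall a, A a -> span_mod B a) -> span_mod A x -> span_mod B x.
Proof.
move=> AB [ps [Aps Cx]]; apply: span_mod_cong Cx _.
elim: ps Aps => [|p ps IH] Aps.
  by rewrite big_nil; exact/span_mod_conductor/conductor0.
have [Rp Ap] := Aps p (mem_head _ _).
rewrite big_cons; apply: span_modD; first by apply: span_modZ => //; exact: AB.
by apply: IH => q Hq; apply: Aps; rewrite inE Hq orbT.
Qed.

Section Decomposition.
Variable es : seq S.
Hypothesis es_prim : forall e, e \in es -> primitive_idem e.
Hypothesis es_sum : C (1 - \sum_(e <- es) e).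

Lemma span_mod_idem x : span_mod idem_mod x.
Proof.
have span_es l : (forall e, e \in l -> primitive_idem e) ->
    span_mod idem_mod (x * \sum_(e <- l) e).
  elim: l => [|e l IH] Pl.
    by rewrite big_nil mulr0; exact/span_mod_conductor/conductor0.
  have [r Rr Cr] := primitive_residue (Pl e (mem_head _ _)) x.
  rewrite big_cons mulrDr; apply: span_modD.
    apply: (@span_mod_cong _ _ (r * e)); first by apply: (conductor_eq Cr); ring.
    by apply: span_mod_term => //; case: (Pl e (mem_head _ _)).
  by apply: IH => e' He'; apply: Pl; rewrite inE He' orbT.
apply: (span_mod_cong _ (span_es _ es_prim)).
by apply: (conductor_eq (conductorMl x es_sum)); ring.
Qed.

Section Subalgebra.
Variables (T : S -> Prop) (x : S).
Hypotheses (HT : is_subring T) (RT : subset_of R T) (Tx : T x).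

(* f := 1 - (x - r) y, with y a quasi-inverse of x - r modulo C. *)
Lemma separating_idem e : primitive_idem e ->
  exists r f, [/\ R r, T f, idem_mod f, C (x * f - r * f) & C (e * (1 - f))].
Proof.
move=> Pe; have [r Rr Cr] := primitive_residue Pe x.
have [y Ty Cy] := conductor_regular HT RT (subringB HT Tx (RT Rr)).
exists r, (1 - (x - r) * y); split=> //.
- by apply: subringB (subring1 HT) (subringM HT (subringB HT Tx (RT Rr)) Ty).
- by apply: idem_mod1B; apply: (conductor_eq (conductorMr (- y) Cy)); ring.
- by apply: (conductor_eq Cy); ring.
- by apply: (conductor_eq (conductorMr y Cr)); ring.
Qed.

Lemma separating_idems l : (forall e, e \in l -> primitive_idem e) ->
  exists tr : seq (S * S),
    (forall p, p \in tr -> [/\ R p.1, T p.2, idem_mod p.2 & C (x * p.2 - p.1 * p.2)]) /\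
    C ((\sum_(e <- l) e) * \prod_(p <- tr) (1 - p.2)).
Proof.
elim: l => [|e l IH] Pl.
  by exists [::]; rewrite !big_nil mul0r; split=> //; exact: conductor0.
have [r [f [Rr Tf If xf ef]]] := separating_idem (Pl e (mem_head _ _)).
have [tr [Ptr Ctr]] : exists tr : seq (S * S),
    (forall p, p \in tr -> [/\ R p.1, T p.2, idem_mod p.2 & C (x * p.2 - p.1 * p.2)]) /\
    C ((\sum_(e <- l) e) * \prod_(p <- tr) (1 - p.2)).
  by apply: IH => e' He'; apply: Pl; rewrite inE He' orbT.
exists ((r, f) :: tr); split.
  by move=> p; rewrite inE => /orP [/eqP -> | /Ptr].
rewrite !big_cons /=; set Pi := \prod_(p <- tr) _ in Ctr *.
by apply: (conductor_eq (conductorD (conductorMr Pi ef) (conductorMl (1 - f) Ctr))); ring.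
Qed.

(* The telescoping sum 1 - Π (1 - f_i) = Σ f_i Π_{j<i} (1 - f_j) splits x into pieces
   x g_i ≡ r_i g_i. *)
Lemma span_mod_telescope (tr : seq (S * S)) :
  (forall p, p \in tr -> [/\ R p.1, T p.2, idem_mod p.2 & C (x * p.2 - p.1 * p.2)]) ->
  forall w, T w -> idem_mod w ->
    span_mod (fun h => T h /\ idem_mod h) (x * w * (1 - \prod_(p <- tr) (1 - p.2))).
Proof.
elim: tr => [|[r f] tr IH] Ptr w Tw Iw.
  by rewrite big_nil subrr mulr0; exact/span_mod_conductor/conductor0.
have [Rr Tf If xf] := Ptr (r, f) (mem_head _ _).
rewrite big_cons /=.
rewrite (_ : _ * _ = r * (w * f) + x * (w * (1 - f)) * (1 - \prod_(p <- tr) (1 - p.2))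
                     + w * (x * f - r * f)); last by ring.
apply: span_modD; last exact/span_mod_conductor/conductorMl.
apply: span_modD.
  by apply: span_mod_term => //; split; [exact: subringM | exact: idem_modM].
apply: IH; first by move=> p Hp; apply: Ptr; rewrite inE Hp orbT.
  by apply: subringM Tw (subringB HT (subring1 HT) Tf).
by apply: idem_modM Iw (idem_mod1B If).
Qed.

Lemma span_mod_subalgebra : span_mod (fun h => T h /\ idem_mod h) x.
Proof.
have [tr [Ptr Ctr]] := separating_idems es_prim.
set Pi := \prod_(p <- tr) (1 - p.2) in Ctr *.
have CPi : C Pi by apply: (conductor_eq (conductorD Ctr (conductorMr Pi es_sum))); ring.
apply: (@span_mod_cong _ _ (x * 1 * (1 - Pi))); last first.
  exact: span_mod_telescope Ptr _ (subring1 HT) idem_mod1.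
by apply: (conductor_eq (conductorMl x CPi)); ring.
Qed.

End Subalgebra.

Definition subsum (I : {set 'I_(size es)}) := \sum_(i in I) es`_i.

Lemma idem_mod_subsum f : idem_mod f ->
  C (f - subsum [set i : 'I_(size es) | `[< C (f * es`_i - es`_i) >]]).
Proof.
move=> If.
rewrite (_ : f - _ = f * (1 - \sum_(e <- es) e)
                    + \sum_(i < size es) (f * es`_i - if `[< C (f * es`_i - es`_i) >]
                                                       then es`_i else 0)); last first.
  by rewrite sumrB -big_mkcond /= (big_nth 0) big_mkord -mulr_sumr /subsum big_set /=; ring.
apply: conductorD; first exact: conductorMl.
apply: conductor_sum => i _; case: asboolP => [//|nfe]; rewrite subr0.
have [Ie _ primE] := es_prim (mem_nth 0 (ltn_ord i)).
have fe : idem_le (f * es`_i) es`_i.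
  by apply: (conductor_eq (conductorMl (- f) Ie)); ring.
by case: (primE _ (idem_modM If Ie) fe).
Qed.

Definition subsum_span (F : {set {set 'I_(size es)}}) : S -> Prop :=
  span_mod (fun h => exists2 I, I \in F & h = subsum I).

Lemma subalgebra_subsum_span T : subalgebra R T ->
  same_set T (subsum_span [set I | `[< T (subsum I) >]]).
Proof.
case=> HT RT x; split=> [Tx|]; last first.
  by apply: span_mod_sub => // h [I]; rewrite inE => /asboolP TI ->.
apply: (span_mod_trans _ (span_mod_subalgebra HT RT Tx)) => h [Th Ih].
have Ch := idem_mod_subsum Ih; set I := [set i | _] in Ch.
apply: (span_mod_cong Ch); rewrite -[subsum I]mul1r.
apply: span_mod_term; first exact: subring1 HR.
exists I => //; rewrite inE; apply/asboolP.
rewrite -(subKr h (subsum I)); apply: (subringB HT) Th _.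
exact/RT/conductor_sub.
Qed.

End Decomposition.

(* f is read as the coefficient function of the formal sum Σ f(t) [t]. *)
Definition in_relations (f : S -> S) : Prop :=
  exists gs : seq (S * seq (S * S)),
    (forall k, (k < size gs)%N -> kahler_rel R (nth (0, [::]) gs k).2) /\
    forall t, f t = \sum_(cg <- gs) cg.1 * fcoef cg.2 t.

Lemma in_relations_ext f g : (forall t, f t = g t) -> in_relations f -> in_relations g.
Proof. by move=> fg [gs [rel_gs Egs]]; exists gs; split=> // t; rewrite -fg. Qed.

Lemma in_relationsD f g :
  in_relations f -> in_relations g -> in_relations (fun t => f t + g t).
Proof.
move=> [gs1 [rel1 E1]] [gs2 [rel2 E2]]; exists (gs1 ++ gs2); split.
  move=> k; rewrite size_cat nth_cat => lt_k; case: ifP => lt_k1; first exact: rel1.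
  by apply: rel2; rewrite ltn_subLR // leqNgt lt_k1.
by move=> t; rewrite big_cat E1 E2.
Qed.

Lemma in_relationsZ a f : in_relations f -> in_relations (fun t => a * f t).
Proof.
move=> [gs [rel_gs Egs]]; exists [seq (a * cg.1, cg.2) | cg <- gs]; split.
  by move=> k; rewrite size_map => lt_k; rewrite (nth_map (0, [::])) //; exact: rel_gs.
by move=> t; rewrite big_map Egs mulr_sumr; apply: eq_bigr => cg _ /=; rewrite mulrA.
Qed.

Lemma in_relations_rel l : kahler_rel R l -> in_relations (fcoef l).
Proof.
move=> rel_l; exists [:: (1, l)]; split; first by move=> k; rewrite ltnS leqn0 => /eqP ->.
by move=> t; rewrite big_seq1 mul1r.
Qed.

Definition dsymb (s : S) : S -> S := fcoef [:: (1, s)].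

Lemma dsymbD a b : in_relations (fun t => dsymb (a + b) t - dsymb a t - dsymb b t).
Proof.
apply: in_relations_ext (in_relations_rel (or_introl (ex_intro _ a (ex_intro _ b erefl)))) => t.
rewrite /dsymb /fcoef !big_cons !big_nil /=.
by case: (a + b == t); case: (a == t); case: (b == t) => /=; ring.
Qed.

Lemma dsymbM a b : in_relations (fun t => dsymb (a * b) t - a * dsymb b t - b * dsymb a t).
Proof.
apply: in_relations_ext
  (in_relations_rel (or_intror (or_introl (ex_intro _ a (ex_intro _ b erefl))))) => t.
rewrite /dsymb /fcoef !big_cons !big_nil /=.
by case: (a * b == t); case: (a == t); case: (b == t) => /=; ring.
Qed.

Lemma dsymb_base r : R r -> in_relations (dsymb r).
Proof. by move=> Rr; apply: in_relations_rel; right; right; exists r. Qed.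

Definition dnull x := in_relations (dsymb x).

Lemma dnull_subring : is_subring dnull.
Proof.
split; [exact/dsymb_base/(subring0 HR) | exact/dsymb_base/(subring1 HR) | |].
- move=> x y dx dy; have := dsymbD (x - y) y; rewrite subrK => dxy.
  apply: in_relations_ext (in_relationsD (in_relationsD dx (in_relationsZ (-1) dy))
                                          (in_relationsZ (-1) dxy)) => t.
  ring.
- move=> x y dx dy.
  apply: in_relations_ext (in_relationsD (in_relationsD (dsymbM x y) (in_relationsZ x dy))
                                          (in_relationsZ y dx)) => t.
  ring.
Qed.

Lemma conductor_dsymb c y : C c -> in_relations (fun t => c * dsymb y t).
Proof.
move=> Cc; have Rcy : R (c * y) by exact/conductor_sub/conductorMr.
have dc := in_relationsZ y (dsymb_base (conductor_sub Cc)).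
apply: in_relations_ext (in_relationsD (in_relationsD (dsymb_base Rcy)
  (in_relationsZ (-1) (dsymbM c y))) (in_relationsZ (-1) dc)) => t.
ring.
Qed.

(* d(e^2) = de gives (2e - 1) de = 0, and (2e - 1)^2 = 1 + 4 (e^2 - e) with e^2 - e ∈ C. *)
Lemma dnull_idem e : idem_mod e -> dnull e.
Proof.
move=> Ie; have := dsymbD e (e * e - e); rewrite addrC subrK => dsum.
have de : in_relations (fun t => (2%:R * e - 1) * dsymb e t).
  apply: in_relations_ext (in_relationsD (in_relationsD (in_relationsZ (-1) (dsymbM e e)) dsum)
    (dsymb_base (conductor_sub Ie))) => t.
  ring.
apply: in_relations_ext (in_relationsD (in_relationsZ (2%:R * e - 1) de)
  (in_relationsZ (- 4%:R) (conductor_dsymb e Ie))) => t.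
ring.
Qed.

Lemma finite_type_of_finite : finite_ext R -> finite_type_ext R.
Proof.
case=> xs spanxs; exists xs => s P RP xsP addP mulP.
have [cs [_ Rcs ->]] := spanxs s.
apply: big_ind => [||i _]; [exact/RP/(subring0 HR) | exact: addP |].
by apply: mulP; [exact: RP | exact/xsP/mem_nth].
Qed.

Lemma fip_of_family (I : finType) (F : I -> S -> Prop) :
  (forall T, subalgebra R T -> exists i, same_set T (F i)) -> fip_ext R.
Proof.
move=> famF; exists [seq F i | i <- enum I] => T /famF [i Ti].
have Ii : i \in enum I by rewrite mem_enum.
exists (index i (enum I)); first by rewrite size_map index_mem.
by rewrite (nth_map i) ?index_mem // nth_index.
Qed.

End Development.

Theorem proposition5p3 (S : comNzRingType) (R : S -> Prop) :
  is_subring R ->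
  finite_ext R -> gilmer_ext R -> seminormal_ext R -> infra_integral_ext R ->
  unramified_ext R /\ fip_ext R.
Proof.
move=> HR Hfin Hgil Hsn Hii.
have [es es_prim es_sum] := primitive_decomposition HR Hgil Hfin (idem_mod1 HR).
split; first split.
- exact: finite_type_of_finite.
- move=> x; apply: (span_mod_sub (dnull_subring HR) (@dsymb_base _ _) (@dnull_idem _ _)).
  exact: span_mod_idem es_prim es_sum x.
- apply: fip_of_family => T algT; eexists.
  exact: subalgebra_subsum_span es_prim es_sum _ algT.
Qed.
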